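(* Let $(K,\mathrm{val})$ be a $2$-henselian valued field whose residue class field $F$ has characteristic $\neq2$ and is formally real, and suppose $(K,\mathrm{val})$ admits an angular component map $\mathrm{an}:K^\times\to F^\times$ (used as $\mathrm{p.an}$ in the definition of $\Phi^A$). Let $A$ be a subring with $B\subseteq A\subseteq K$ and let $f\in A\setminus\{0\}$. Then the quasi-quadratic module in $A$ generated by $f$, namely $\{f(u_1^2+\cdots+u_m^2): m\ge0,\ u_i\in A\}$, equals $\Phi^A(M_f,[\![\mathrm{val}(f)]\!])$, where $M_f=\{\mathrm{an}(f)(c_1^2+\cdots+c_m^2): m\ge 0,\ c_i\in F\}$ is the quasi-quadratic module of $F$ generated by $\mathrm{an}(f)$.
   Context: Let $(G,\le)$ be a totally ordered abelian group written multiplicatively with identity $e$; $G_{\ge e}=\{g\in G:g\ge e\}$, $G^2=\{g^2:g\in G\}$. Let $(K,\mathrm{val})$ be a valued field with surjective valuation $\mathrm{val}:K\to G\cup\{\infty\}$, valuation ring $B=\{x:\mathrm{val}(x)\ge e\}$, residue map $\pi:B\to F$, residue field $F$. A strict unit is $x\in B^\times$ with $\pi(x)=1$; when $\mathrm{char}F\ne2$, $2$-henselian is equivalent to every strict unit being a square in $K$. For a subring $A$ with $B\subseteq A\subseteq K$ put $H=\mathrm{val}(A^\times)$. For $g\in G$: $\overline g$ is its class in $G/G^2$, $[\![g]\!]$ its class in $G/H^2$; ''$\mathrm{val}(x)=\overline g$'' means $\overline{\mathrm{val}(x)}=\overline g$, similarly for $[\![\cdot]\!]$. A quasi-quadratic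 module in a commutative ring $R$ is a subset $M\subseteq R$ with $M+M\subseteq M$ and $a^2M\subseteq M$ for all $a\in R$. A pseudo-angular component map is a map $\mathrm{p.an}:K^\times\to F^\times$ such that: (1) $\mathrm{p.an}(u)=\pi(u)$ for $u\in B^\times$; (2) $\mathrm{p.an}(ux)=\pi(u)\mathrm{p.an}(x)$ for $u\in B^\times,x\in K^\times$; (3) for all $g\in G$, $c\in F^\times$ there is $w\in K$ with $\mathrm{val}(w)=g$, $\mathrm{p.an}(w)=c$; (4) for nonzero $x_1,x_2$ with $x_1+x_2\ne0$: if $\mathrm{val}(x_1)<\mathrm{val}(x_2)$ then $\mathrm{p.an}(x_1+x_2)=\mathrm{p.an}(x_1)$; if $\mathrm{val}(x_1)=\mathrm{val}(x_2)$ and $\mathrm{p.an}(x_1)+\mathrm{p.an}(x_2)\ne0$ then $\mathrm{val}(x_1+x_2)=\mathrm{val}(x_1)$ and $\mathrm{p.an}(x_1+x_2)=\mathrm{p.an}(x_1)+\mathrm{p.an}(x_2)$; (5) if $x,y\in K^\times$, $\overline{\mathrm{val}(x)}=\overline{\mathrm{val}(y)}$ and $\mathrm{p.an}(x)=\mathrm{p.an}(y)$ then $y=u^2x$ for some $u\in K^\times$; (6) for $a,u\in K^\times$ there is $k\in F^\times$ with $\mathrm{p.an}(au^2)=\mathrm{p.an}(a)k^2$. An angular component map $\mathrm{an}$ is a pseudo-angular component map that is a group homomorphism. $\Phi^A(M,[\![g]\!])=\{x\in A\setminus\{0\}:\ \mathrm{val}(x)=\overline g,\ (\mathrm{val}(x)=[\![g]\!]\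 \text{or}\ \mathrm{val}(x)>g),\ \mathrm{an}(x)\in M\}\cup\{0\}$. *)

From mathcomp Require Import all_boot all_order all_algebra.
Set Implicit Arguments. Unset Strict Implicit. Unset Printing Implicit Defensive.
Import Order.TTheory GRing.Theory.
Local Open Scope ring_scope.

(* The value group G is written ADDITIVELY (G : zmodType): identity e = 0,
   product gh = g + h, g^2 = g + g.  The total order is an explicit relation. *)

Section Defs.
Variable G : zmodType.
Variable leG : G -> G -> Prop.

Definition ltG (g h : G) : Prop := leG g h /\ g <> h.

Definition is_ordered_group : Prop :=
  (forall g, leG g g) /\
  (forall g h, leG g h -> leG h g -> g = h) /\
  (forall g h k, leG g h -> leG h k -> leG g k) /\
  (forall g h, leG g h \/ leG h g) /\
  (forall g h k, leG g h -> leG (g + k) (h + k)).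

Variable K : fieldType.
(* val x for x <> 0; the value val 0 is irrelevant (it stands for infinity) *)
Variable val : K -> G.

Definition is_valuation : Prop :=
  (forall x y : K, x != 0 -> y != 0 -> val (x * y) = val x + val y) /\
  (forall x y : K, x != 0 -> y != 0 -> x + y != 0 ->
      leG (val x) (val (x + y)) \/ leG (val y) (val (x + y))) /\
  (forall g : G, exists x : K, x != 0 /\ val x = g).

Definition inB (x : K) : Prop := x = 0 \/ leG 0 (val x).
Definition unitB (x : K) : Prop := x != 0 /\ inB x /\ inB x^-1.

Variable F : fieldType.
Variable pi : K -> F.

Definition is_residue_map : Prop :=
  (forall x y, inB x -> inB y -> pi (x + y) = pi x + pi y) /\
  (forall x y, inB x -> inB y -> pi (x * y) = pi x * pi y) /\
  pi 1 = 1 /\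
  (forall x, inB x -> (pi x = 0 <-> (x = 0 \/ ltG 0 (val x)))) /\
  (forall c : F, exists x, inB x /\ pi x = c).

Definition strict_unit (x : K) : Prop := unitB x /\ pi x = 1.

(* 2-henselian, in the form valid when char F <> 2 *)
Definition two_henselian_sq : Prop :=
  forall x, strict_unit x -> exists y : K, x = y ^+ 2.

Definition eqG2 (g h : G) : Prop := exists k : G, g - h = k + k.

(* pseudo-angular component map (an x only meaningful for x <> 0) *)
Definition is_pseudo_an (an : K -> F) : Prop :=
  (forall x, x != 0 -> an x != 0) /\
  (forall u, unitB u -> an u = pi u) /\
  (forall u x, unitB u -> x != 0 -> an (u * x) = pi u * an x) /\
  (forall (g : G) (c : F), c != 0 -> exists w, w != 0 /\ val w = g /\ an w = c) /\
  (forall x1 x2, x1 != 0 -> x2 != 0 -> x1 + x2 != 0 ->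
      (ltG (val x1) (val x2) -> an (x1 + x2) = an x1) /\
      (val x1 = val x2 -> an x1 + an x2 != 0 ->
          val (x1 + x2) = val x1 /\ an (x1 + x2) = an x1 + an x2)) /\
  (forall x y, x != 0 -> y != 0 -> eqG2 (val x) (val y) -> an x = an y ->
      exists u, u != 0 /\ y = u ^+ 2 * x) /\
  (forall a u, a != 0 -> u != 0 ->
      exists k, k != 0 /\ an (a * u ^+ 2) = an a * k ^+ 2).

Definition is_an (an : K -> F) : Prop :=
  is_pseudo_an an /\
  (forall x y, x != 0 -> y != 0 -> an (x * y) = an x * an y).

Variable A : K -> Prop.

Definition unitA (u : K) : Prop := A u /\ u != 0 /\ A u^-1.

Definition eqH2 (g h : G) : Prop :=
  exists u, unitA u /\ g - h = val u + val u.

Definition Phi (an : K -> F) (M : F -> Prop) (g : G) (x : K) : Prop :=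
  x = 0 \/
  (A x /\ x != 0 /\ eqG2 (val x) g /\ (eqH2 (val x) g \/ ltG g (val x)) /\
   M (an x)).

End Defs.

Definition formally_real (F : fieldType) : Prop :=
  forall s : seq F, \sum_(c <- s) c ^+ 2 != -1.

Definition is_subring (K : fieldType) (A : K -> Prop) : Prop :=
  A 0 /\ A 1 /\ (forall x y, A x -> A y -> A (x + y)) /\
  (forall x, A x -> A (- x)) /\ (forall x y, A x -> A y -> A (x * y)).

Definition qqm_F (F : fieldType) (c : F) (y : F) : Prop :=
  exists s : seq F, y = c * \sum_(d <- s) d ^+ 2.

Definition qqm_A (K : fieldType) (A : K -> Prop) (f : K) (x : K) : Prop :=
  exists s : seq K, (forall u, u \in s -> A u) /\ x = f * \sum_(u <- s) u ^+ 2.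

From mathcomp Require Import all_boot all_order all_algebra.
From mathcomp Require Import ring.
Set Implicit Arguments. Unset Strict Implicit. Unset Printing Implicit Defensive.
Import GRing.Theory.
Local Open Scope ring_scope.

(* Write B for the valuation ring, A for the ring with B <= A <= K, and call
   a unit w of B an "sos-unit" when its residue pi w is a sum of squares of F.

   - Normal form: since F is formally real, every nonzero sum of squares of
     elements of A can be written v^2 * w with v in A and w an sos-unit.
     Adding u^2 to v^2 * w, one factors out the square of smaller value; the
     cofactor is again an sos-unit (its residue is a nonzero sum of squares,
     or is 1).
   - Lifting: by 2-henselianity every sos-unit is a sum of squares of
     elements of B (lift the residue sum of squares, and the quotient is a
     strict unit, hence a square).
   - The inclusion qqm_A <= Phi follows from the normal form and the
     multiplicativity of an; for Phi <= qqm_A, a nonzero x in Phi is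
     f * u^2 * y with u in A and y an sos-unit, and y is a sum of squares by
     the lifting lemma. *)

Local Notation sumsq s := (\sum_(d <- s) d ^+ 2).

Lemma sumsq_scale (R : comPzRingType) (a : R) (s : seq R) :
  sumsq [seq a * d | d <- s] = a ^+ 2 * sumsq s.
Proof. by rewrite big_map big_distrr; apply: eq_bigr => d _; rewrite exprMn. Qed.

Lemma formally_real_sumsq_cons (F : fieldType) (c : F) (s : seq F) :
  formally_real F -> sumsq s != 0 -> c ^+ 2 + sumsq s != 0.
Proof.
move=> hreal s0; have [->|c0] := eqVneq c 0; first by rewrite expr2 mul0r add0r.
apply/eqP => hc; move/eqP: (hreal [seq c^-1 * d | d <- s]); apply.
have hs : sumsq s = - c ^+ 2 by apply: (addrI (c ^+ 2)); rewrite hc subrr.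
by rewrite sumsq_scale hs; field.
Qed.

Section OrderedGroup.
Variables (G : zmodType) (leG : G -> G -> Prop).
Hypothesis hG : is_ordered_group leG.

Lemma leG_refl g : leG g g.
Proof. by case: hG => h _; apply: h. Qed.

Lemma leG_anti g h : leG g h -> leG h g -> g = h.
Proof. by case: hG => _ [h1 _]; apply: h1. Qed.

Lemma leG_trans g h k : leG g h -> leG h k -> leG g k.
Proof. by case: hG => _ [_ [h1 _]]; apply: h1. Qed.

Lemma leG_total g h : leG g h \/ leG h g.
Proof. by case: hG => _ [_ [_ [h1 _]]]. Qed.

Lemma leG_add2r g h k : leG g h -> leG (g + k) (h + k).
Proof. by case: hG => _ [_ [_ [_ h1]]]; apply: h1. Qed.

Lemma leG_ltG_total g h : leG g h \/ ltG leG h g.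
Proof.
have [|hg] := leG_total g h; first by left.
have [->|ne] := eqVneq h g; first by left; apply: leG_refl.
by right; split => // e; rewrite e eqxx in ne.
Qed.

Lemma leG_subr_ge0 g h : leG g h -> leG 0 (h - g).
Proof. by move=> /(leG_add2r (- g)); rewrite subrr. Qed.

Lemma leG_oppr_le0 g : leG 0 g -> leG (- g) 0.
Proof. by move=> /(leG_add2r (- g)); rewrite add0r subrr. Qed.

Lemma leG_oppr_ge0 g : leG g 0 -> leG 0 (- g).
Proof. by move=> /(leG_add2r (- g)); rewrite add0r subrr. Qed.

Lemma leG_add_ge0 g h : leG 0 g -> leG 0 h -> leG 0 (g + h).
Proof. by move=> hg hh; apply: leG_trans hh _; have := leG_add2r h hg; rewrite add0r. Qed.

Lemma double_eq0 (k : G) : k + k = 0 -> k = 0.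
Proof.
move=> hk; have [hk0|hk0] := leG_total 0 k.
- by apply: (leG_anti _ hk0); have := leG_add2r k hk0; rewrite add0r hk.
- by apply: (leG_anti hk0); have := leG_add2r k hk0; rewrite add0r hk.
Qed.

Lemma double_ge0 k : leG 0 (k + k) -> leG 0 k.
Proof.
move=> hkk; have [//|hk0] := leG_total 0 k.
have hkk0 : leG (k + k) 0 by apply: (leG_trans _ hk0); have := leG_add2r k hk0; rewrite add0r.
by rewrite (double_eq0 (leG_anti hkk0 hkk)); apply: leG_refl.
Qed.

Lemma ltG_add_double g k : ltG leG 0 k -> ltG leG g (g + (k + k)).
Proof.
case=> hk k0; split.
  by have := leG_add2r g (leG_add_ge0 hk hk); rewrite add0r addrC.
by move=> /(congr1 (fun h => h - g)); rewrite subrr addrAC subrr add0r => /esym/double_eq0/esym.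
Qed.

Section Valuation.
Variables (K : fieldType) (val : K -> G).
Hypothesis hval : is_valuation leG val.

Local Notation inB := (inB leG val).
Local Notation unitB := (unitB leG val).

Lemma valM x y : x != 0 -> y != 0 -> val (x * y) = val x + val y.
Proof. by case: hval => h _; apply: h. Qed.

Lemma valD x y : x != 0 -> y != 0 -> x + y != 0 ->
  leG (val x) (val (x + y)) \/ leG (val y) (val (x + y)).
Proof. by case: hval => _ [h _]; apply: h. Qed.

Lemma val_surj g : exists x, x != 0 /\ val x = g.
Proof. by case: hval => _ [_ h]; apply: h. Qed.

Lemma val1 : val 1 = 0.
Proof.
have := valM (oner_neq0 K) (oner_neq0 K); rewrite mulr1.
by move=> /(congr1 (fun g => g - val 1)); rewrite addrK subrr.
Qed.

Lemma valV x : x != 0 -> val x^-1 = - val x.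
Proof.
move=> x0; apply: (addrI (val x)); rewrite subrr -valM ?invr_neq0 //.
by rewrite mulfV // val1.
Qed.

Lemma val_div x y : x != 0 -> y != 0 -> val (x / y) = val x - val y.
Proof. by move=> x0 y0; rewrite valM ?invr_neq0 // valV. Qed.

Lemma valX2 x : x != 0 -> val (x ^+ 2) = val x + val x.
Proof. by move=> x0; rewrite expr2 valM. Qed.

Lemma inB0 : inB 0. Proof. by left. Qed.

Lemma inB1 : inB 1. Proof. by right; rewrite val1; apply: leG_refl. Qed.

Lemma inBM x y : inB x -> inB y -> inB (x * y).
Proof.
have [->|x0] := eqVneq x 0; first by rewrite mul0r => _ _; left.
have [->|y0] := eqVneq y 0; first by rewrite mulr0 => _ _; left.
case=> [/eqP|hx]; first by rewrite (negPf x0).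
case=> [/eqP|hy]; first by rewrite (negPf y0).
by right; rewrite valM //; apply: leG_add_ge0.
Qed.

Lemma inBX2 x : inB x -> inB (x ^+ 2).
Proof. by move=> hx; rewrite expr2; apply: inBM. Qed.

Lemma inBD x y : inB x -> inB y -> inB (x + y).
Proof.
have [->|x0] := eqVneq x 0; first by rewrite add0r.
have [->|y0] := eqVneq y 0; first by rewrite addr0.
have [->|s0] := eqVneq (x + y) 0; first by left.
case=> [/eqP|hx]; first by rewrite (negPf x0).
case=> [/eqP|hy]; first by rewrite (negPf y0).
by right; case: (valD x0 y0 s0); [apply: leG_trans hx | apply: leG_trans hy].
Qed.

Lemma inB_div x y : x != 0 -> y != 0 -> leG (val y) (val x) -> inB (x / y).
Proof. by move=> x0 y0 hyx; right; rewrite val_div //; apply: leG_subr_ge0. Qed.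

Lemma unitB_neq0 w : unitB w -> w != 0. Proof. by case. Qed.

Lemma unitB_inB w : unitB w -> inB w. Proof. by case=> _ []. Qed.

Lemma unitB_val0 w : unitB w -> val w = 0.
Proof.
case=> w0 [[e|hw] [/eqP|hw']]; rewrite ?e ?eqxx // in w0.
  by rewrite invr_eq0 (negPf w0).
rewrite valV // in hw'; apply: (leG_anti _ hw).
by rewrite -[val w]opprK; apply: leG_oppr_le0.
Qed.

Lemma val0_unitB w : w != 0 -> val w = 0 -> unitB w.
Proof.
by move=> w0 hw; split=> //; split; right; rewrite ?valV // hw ?oppr0; apply: leG_refl.
Qed.

Section Residue.
Variables (F : fieldType) (pi : K -> F).
Hypothesis hpi : is_residue_map leG val pi.

Local Notation strict_unit := (strict_unit leG val pi).

Lemma piD x y : inB x -> inB y -> pi (x + y) = pi x + pi y.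
Proof. by case: hpi => h _; apply: h. Qed.

Lemma piM x y : inB x -> inB y -> pi (x * y) = pi x * pi y.
Proof. by case: hpi => _ [h _]; apply: h. Qed.

Lemma pi1 : pi 1 = 1.
Proof. by case: hpi => _ [_ [h _]]. Qed.

Lemma pi_eq0 x : inB x -> (pi x = 0 <-> (x = 0 \/ ltG leG 0 (val x))).
Proof. by case: hpi => _ [_ [_ [h _]]]; apply: h. Qed.

Lemma pi_surj c : exists x, inB x /\ pi x = c.
Proof. by case: hpi => _ [_ [_ [_ h]]]. Qed.

Lemma pi0 : pi 0 = 0.
Proof. by apply/(pi_eq0 inB0); left. Qed.

Lemma piX2 x : inB x -> pi (x ^+ 2) = pi x ^+ 2.
Proof. by move=> hx; rewrite !expr2 piM. Qed.

Lemma pi_val_gt0 x : ltG leG 0 (val x) -> pi x = 0.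
Proof. by move=> hx; apply/(pi_eq0 (or_intror (proj1 hx))); right. Qed.

Lemma unitB_pi_neq0 w : unitB w -> pi w != 0.
Proof.
move=> hw; have v0 := unitB_val0 hw; case: hw => w0 [hwB _].
by apply/eqP => /(pi_eq0 hwB) [/eqP|[_]]; rewrite ?(negPf w0) ?v0.
Qed.

Lemma pi_neq0_unitB w : inB w -> pi w != 0 -> unitB w.
Proof.
move=> hw hp; have w0 : w != 0 by apply: contraNneq hp => ->; rewrite pi0.
apply: val0_unitB => //; case: hw => [/eqP|hw]; first by rewrite (negPf w0).
have [//|ne] := eqVneq (val w) 0; move/eqP: hp; case.
by apply: pi_val_gt0; split => // e; rewrite e eqxx in ne.
Qed.

Lemma piV w : unitB w -> pi w^-1 = (pi w)^-1.
Proof.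
move=> hw; have pw := unitB_pi_neq0 hw; case: (hw) => w0 [wB wiB].
apply: (mulfI pw); rewrite -piM // mulfV // mulfV //; exact: pi1.
Qed.

Lemma strict_unit_1D z : inB z -> pi z = 0 -> strict_unit (1 + z).
Proof.
move=> zB pz; have hB : inB (1 + z) by apply: inBD => //; apply: inB1.
have p1z : pi (1 + z) = 1 by rewrite piD ?pz ?addr0 ?pi1 //; apply: inB1.
by split=> //; apply: pi_neq0_unitB => //; rewrite p1z oner_neq0.
Qed.

Definition sos_unit (w : K) : Prop :=
  unitB w /\ exists cs : seq F, pi w = sumsq cs.

Lemma strict_sos_unit w : strict_unit w -> sos_unit w.
Proof. by case=> uw pw; split=> //; exists [:: 1]; rewrite big_seq1 pw expr1n. Qed.

Lemma sos_unit1 : sos_unit 1.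
Proof.
apply: strict_sos_unit; split; last exact: pi1.
by apply: val0_unitB; [apply: oner_neq0 | apply: val1].
Qed.

Section FormallyReal.
Hypothesis hreal : formally_real F.

(* Adding the square of an element of B to an sos-unit gives an sos-unit:
   the residue is a sum of squares which cannot vanish. *)
Lemma sos_unit_addsq r w : inB r -> sos_unit w -> sos_unit (r ^+ 2 + w).
Proof.
move=> rB [uw [cs pw]]; have [r2B wB] := (inBX2 rB, unitB_inB uw).
have hB : inB (r ^+ 2 + w) by apply: inBD.
have pr : pi (r ^+ 2 + w) = sumsq (pi r :: cs) by rewrite piD // piX2 // pw big_cons.
split; last by exists (pi r :: cs).
apply: pi_neq0_unitB => //; rewrite pr big_cons.
by apply: formally_real_sumsq_cons; rewrite // -pw unitB_pi_neq0.
Qed.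

Section Subring.
Variable A : K -> Prop.
Hypothesis hA : is_subring A.
Hypothesis hBA : forall x, inB x -> A x.

Lemma A_mul x y : A x -> A y -> A (x * y).
Proof. by case: hA => _ [_ [_ [_ h]]]; apply: h. Qed.

Definition sumsq_form (x : K) : Prop :=
  exists v w, [/\ v != 0, A v, sos_unit w & x = v ^+ 2 * w].

(* Adding u^2 preserves the normal form: factor out the square of smaller
   value; when that is u^2 the cofactor is 1 plus a small element. *)
Lemma sumsq_form_addsq u y :
  A u -> u != 0 -> sumsq_form y -> sumsq_form (u ^+ 2 + y).
Proof.
move=> Au u0 [v [w [v0 Av ws ->]]]; have w0 := unitB_neq0 (proj1 ws).
have [hvu|huv] := leG_ltG_total (val v) (val u).
  exists v, ((u / v) ^+ 2 + w); split => //; last by field.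
  by apply: sos_unit_addsq => //; apply: inB_div.
have small : ltG leG 0 (val (v / u)).
  rewrite val_div //; case: huv => le ne; split; first exact: leG_subr_ge0.
  by move/esym/eqP; rewrite subr_eq0 => /eqP /esym.
have vuB : inB (v / u) by right; case: small.
exists u, (1 + (v / u) ^+ 2 * w); split => //; last by field.
have [vu2B wB] := (inBX2 vuB, unitB_inB (proj1 ws)).
apply/strict_sos_unit/strict_unit_1D; first exact: inBM.
by rewrite piM // piX2 // pi_val_gt0 // expr2 !mul0r.
Qed.

Lemma sumsq_normal_form (s : seq K) :
  (forall u, u \in s -> A u) -> sumsq s = 0 \/ sumsq_form (sumsq s).
Proof.
elim: s => [|u s IH] hs; first by left; rewrite big_nil.
have Au : A u by apply: hs; rewrite mem_head.
have hs' : forall x, x \in s -> A x by move=> x hx; apply: hs; rewrite in_cons hx orbT.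
have [] := IH hs'; rewrite big_cons.
- move=> ->; have [->|u0] := eqVneq u 0; first by left; rewrite expr2 mulr0 addr0.
  by right; exists u, 1; split; rewrite ?addr0 ?mulr1 //; apply: sos_unit1.
- have [->|u0] := eqVneq u 0; first by rewrite expr2 mulr0 add0r; right.
  by move=> hform; right; apply: sumsq_form_addsq.
Qed.

(* Membership of x in Phi(., [[g]]) forces val x = g + 2 val u for some
   nonzero u in A: either by the H^2-class, or because val x > g puts the
   square root of val x - g among the values of B. *)
Lemma Phi_val_shift x g :
  eqG2 (val x) g -> eqH2 val A (val x) g \/ ltG leG g (val x) ->
  exists u, [/\ A u, u != 0 & val x = g + (val u + val u)].
Proof.
move=> [k hk] [[u [[Au [u0 _]] hu]]|[hlt _]].
  by exists u; split => //; rewrite -hu addrC subrK.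
have [u [u0 vu]] := val_surj k; exists u; split => //; last by rewrite vu -hk addrC subrK.
by apply: hBA; right; rewrite vu; apply: double_ge0; rewrite -hk; apply: leG_subr_ge0.
Qed.

Section TwoHenselian.
Hypothesis hhens : two_henselian_sq leG val pi.

Lemma lift_sumsq (cs : seq F) : exists ds : seq K,
  (forall d, d \in ds -> inB d) /\ inB (sumsq ds) /\ pi (sumsq ds) = sumsq cs.
Proof.
elim: cs => [|c cs [ds [hds [hB hp]]]].
  by exists [::]; rewrite !big_nil; split => //; split; [apply: inB0 | apply: pi0].
have [d [dB <-]] := pi_surj c; exists (d :: ds); split.
  by move=> x; rewrite in_cons => /orP [/eqP ->|]; [|apply: hds].
have d2B := inBX2 dB; rewrite !big_cons; split; first exact: inBD.
by rewrite piD // piX2 // hp.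
Qed.

(* In a 2-henselian field every sos-unit is a sum of squares over B: it is
   a strict unit times a lifted sum of squares, and strict units are squares. *)
Lemma sos_unit_sumsq y : sos_unit y ->
  exists ds : seq K, (forall d, d \in ds -> inB d) /\ y = sumsq ds.
Proof.
move=> [uy [cs py]]; have [ds [hds [zB pz]]] := lift_sumsq cs.
set z := sumsq ds in zB pz.
have uz : unitB z by apply: pi_neq0_unitB; rewrite // pz -py unitB_pi_neq0.
have [y0 z0] := (unitB_neq0 uy, unitB_neq0 uz).
have ziB : inB z^-1 by case: uz => _ [].
have yB := unitB_inB uy; have qB : inB (y / z) by apply: inBM.
have pq : pi (y / z) = 1 by rewrite piM // piV // pz -py mulfV ?unitB_pi_neq0.
have sq : strict_unit (y / z) by split=> //; apply: pi_neq0_unitB; rewrite // pq oner_neq0.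
have [t ht] := hhens sq.
have t0 : t != 0 by apply: contraTneq (mulf_neq0 y0 (invr_neq0 z0)) => t0; rewrite ht t0 expr2 mulr0 eqxx.
have tB : inB t.
  right; have := unitB_val0 (proj1 sq); rewrite ht valX2 // => /double_eq0 ->.
  exact: leG_refl.
exists [seq t * d | d <- ds]; split; last by rewrite sumsq_scale -/z -ht mulfVK.
by move=> e /mapP [d hd ->]; apply: inBM => //; apply: hds.
Qed.

Section AngularComponent.
Variable an : K -> F.
Hypothesis han : is_an leG val pi an.

Lemma anM x y : x != 0 -> y != 0 -> an (x * y) = an x * an y.
Proof. by case: han => _ h; apply: h. Qed.

Lemma an_unitB u : unitB u -> an u = pi u.
Proof. by case: han => [[_ [h _]] _]; apply: h. Qed.

Lemma an_neq0 x : x != 0 -> an x != 0.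
Proof. by case: han => [[h _] _]; apply: h. Qed.

Lemma anX2 x : x != 0 -> an (x ^+ 2) = an x ^+ 2.
Proof. by move=> x0; rewrite !expr2 anM. Qed.

Variable f : K.
Hypothesis hfA : A f.
Hypothesis hf0 : f != 0.

Local Notation Phi_f := (Phi leG val A an (qqm_F (an f)) (val f)).

(* qqm_A <= Phi: for x = f * v^2 * w in normal form, val x = val f + 2 val v
   (an H^2-class shift if v^-1 lies in B, a strict increase otherwise) and
   an x = an f * (an v)^2 * pi w lies in M_f. *)
Lemma qqm_A_sub_Phi x : qqm_A A f x -> Phi_f x.
Proof.
case=> s [hs ->]; have [->|[v [w [v0 Av [uw [cs pw]] ->]]]] := sumsq_normal_form hs.
  by left; rewrite mulr0.
have [w0 wB] := (unitB_neq0 uw, unitB_inB uw).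
have x0 : f * (v ^+ 2 * w) != 0 by rewrite !mulf_neq0 ?expf_neq0.
have vx : val (f * (v ^+ 2 * w)) = val f + (val v + val v).
  by rewrite valM ?mulf_neq0 ?expf_neq0 // valM ?expf_neq0 // valX2 // (unitB_val0 uw) addr0.
have shift : val (f * (v ^+ 2 * w)) - val f = val v + val v by rewrite vx addrAC subrr add0r.
right; split; first by apply: A_mul => //; apply: A_mul; [rewrite expr2; apply: A_mul | apply: hBA].
split=> //; split; first by exists (val v).
split; last first.
  exists [seq an v * c | c <- cs]; rewrite sumsq_scale -pw.
  rewrite anM ?mulf_neq0 ?expf_neq0 // anM ?expf_neq0 // (an_unitB uw) anX2 //.
have [hv|hv] := leG_ltG_total (val v) 0; last by right; rewrite vx; apply: ltG_add_double.
left; exists v; split=> //; split=> //; split=> //.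
by apply: hBA; right; rewrite valV //; apply: leG_oppr_ge0.
Qed.

(* Phi <= qqm_A: write x = f * u^2 * y; then y is a unit of value 0 with
   pi y = an y a sum of squares, hence a sum of squares over B. *)
Lemma Phi_sub_qqm_A x : Phi_f x -> qqm_A A f x.
Proof.
case=> [->|[Ax [x0 [hG2 [hH [cs hcs]]]]]].
  by exists [::]; rewrite big_nil mulr0.
have [u [Au u0 hu]] := Phi_val_shift hG2 hH.
have [y ex] : exists y, x = f * u ^+ 2 * y.
  by exists (x / (f * u ^+ 2)); rewrite mulrC mulfVK // mulf_neq0 ?expf_neq0.
have y0 : y != 0 by apply: contraNneq x0 => y0; rewrite ex y0 mulr0.
have anx : an x = an f * (an u ^+ 2 * an y).
  by rewrite ex -mulrA anM ?mulf_neq0 ?expf_neq0 // anM ?expf_neq0 // anX2.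
have uy : unitB y.
  have hx : val x = val f + (val u + val u) + val y.
    by rewrite ex valM ?mulf_neq0 ?expf_neq0 // valM ?expf_neq0 // valX2.
  apply: val0_unitB => //; move: hx; rewrite hu.
  by move/(congr1 (fun g => g - (val f + (val u + val u)))); rewrite subrr addrC addKr.
have py : pi y = sumsq [seq (an u)^-1 * c | c <- cs].
  have hs : sumsq cs = an u ^+ 2 * an y by apply: (mulfI (an_neq0 hf0)); rewrite -hcs.
  by rewrite sumsq_scale hs -an_unitB //; field; apply: an_neq0.
have [ds [hds ey]] := sos_unit_sumsq (conj uy (ex_intro _ _ py)).
exists [seq u * d | d <- ds]; split; last by rewrite sumsq_scale -ey ex -mulrA.
by move=> e /mapP [d hd ->]; apply: A_mul => //; apply: hBA; apply: hds.
Qed.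

End AngularComponent.
End TwoHenselian.
End Subring.
End FormallyReal.
End Residue.
End Valuation.
End OrderedGroup.

Unset Implicit Arguments.

Theorem mainTheorem14
  (G : zmodType) (leG : G -> G -> Prop) (hG : is_ordered_group leG)
  (K : fieldType) (val : K -> G) (hval : is_valuation leG val)
  (F : fieldType) (pi : K -> F) (hpi : is_residue_map leG val pi)
  (hchar : (2%:R : F) != 0) (hreal : formally_real F)
  (hhens : two_henselian_sq leG val pi)
  (an : K -> F) (han : is_an leG val pi an)
  (A : K -> Prop) (hA : is_subring A) (hBA : forall x, inB leG val x -> A x)
  (f : K) (hfA : A f) (hf0 : f != 0) :
  forall x : K,
    qqm_A A f x <-> Phi leG val A an (qqm_F (an f)) (val f) x.
Proof.
move=> x; split.
- exact: (qqm_A_sub_Phi hG hval hpi hreal hA hBA han hfA hf0).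
- exact: (Phi_sub_qqm_A hG hval hpi hA hBA hhens han hf0).
Qed.
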